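(* Let $n = 2k+1$ be an odd integer and $m = \binom{n}{2} = k(2k+1)$. If an edge-coloring of a complete graph contains no rainbow $n$-cycle, then it contains no rainbow $m$-cycle.
   Context: A coloring is an arbitrary (not necessarily proper) assignment of colors, from an arbitrary set, to the edges of an undirected complete graph; the graph may be finite or infinite. A rainbow $n$-cycle is a cycle through $n$ distinct vertices whose $n$ edges all receive pairwise distinct colors. *)

From Stdlib Require Import Arith.

(* An edge-colouring of the complete graph on vertex type V with colours in C
   is a function c : V -> V -> C; it is a colouring of the undirected complete
   graph when c is symmetric (the value c x x is irrelevant). *)
Definition rainbow_cycle {V C : Type} (c : V -> V -> C) (n : nat) : Prop :=
  exists f : nat -> V,
    (forall i j, i < n -> j < n -> f i = f j -> i = j) /\
    (forall i j, i < n -> j < n ->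
       c (f i) (f (S i mod n)) = c (f j) (f (S j mod n)) -> i = j).

From Stdlib Require Import Arith Lia Classical.

(* Let M = k(2k+1) and let v_0 ... v_(M-1) be a rainbow M-cycle, indices read
   modulo M.  The chord v_a v_(a+2k) closes the path v_a ... v_(a+2k) into a
   (2k+1)-cycle; this cycle is not rainbow, so the chord has the colour of
   exactly one side v_(a+t) v_(a+t+1), t < 2k.  Call a low if t < k and high
   otherwise.  The (2k+1)-cycle formed by the k+1 chords starting at a, a+2k,
   ..., a+2k^2 (the last one ends at a+2k^2+2k = a+k+M) and the k sides from
   a+k back to a shows that a is low or a+2k^2 is high; hence if a is high, so
   is a+2k^2.  The (2k+1)-cycle of the chords starting at 0, 2k, ..., 4k^2
   yields a high a with a+k low.  But 2k * 2k^2 = k + (2k-1)M, so shifting a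
   2k times by 2k^2 makes a+k high as well, a contradiction. *)

Lemma mod_eq_window M p q : p mod M = q mod M -> p < q + 2 * M -> q < p + 2 * M ->
  p = q \/ p = q + M \/ q = p + M.
Proof.
  intros Hpq Hp Hq.
  assert (HM : 0 < M) by lia.
  pose proof (Nat.div_mod_eq p M) as Ep; pose proof (Nat.div_mod_eq q M) as Eq.
  assert (p / M < q / M + 2) by (apply (Nat.mul_lt_mono_pos_l M); nia).
  assert (q / M < p / M + 2) by (apply (Nat.mul_lt_mono_pos_l M); nia).
  assert (p / M = q / M \/ p / M = q / M + 1 \/ q / M = p / M + 1) as [E | [E | E]] by lia;
    rewrite E in *; nia.
Qed.

Lemma closed_walk_repeats_colour {V C : Type} (c : V -> V -> C) (n : nat) (g : nat -> V) :
  ~ rainbow_cycle c n -> g n = g 0 -> (forall i j, i < j < n -> g i <> g j) ->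
  exists i j, i < j < n /\ c (g i) (g (S i)) = c (g j) (g (S j)).
Proof.
  intros no_rainbow Hclosed Hinj.
  apply NNPP; intros Hrepeat; apply no_rainbow.
  assert (Hnext : forall i, i < n -> g (S i mod n) = g (S i)).
  { intros i Hi. destruct (Nat.eq_dec (S i) n) as [<- | Hne].
    - now rewrite Nat.Div0.mod_same.
    - rewrite Nat.mod_small by lia. reflexivity. }
  exists g; split; intros i j Hi Hj E.
  - destruct (Nat.lt_trichotomy i j) as [Hij | [Hij | Hij]]; [exfalso | assumption | exfalso].
    + exact (Hinj i j (conj Hij Hj) E).
    + exact (Hinj j i (conj Hij Hi) (eq_sym E)).
  - rewrite !Hnext in E by assumption.
    destruct (Nat.lt_trichotomy i j) as [Hij | [Hij | Hij]]; [exfalso | assumption | exfalso];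
      apply Hrepeat; [exists i, j | exists j, i]; auto.
Qed.

Section LongRainbowCycle.

Context {V C : Type} {c : V -> V -> C} {k : nat}.
Hypothesis k_pos : 1 <= k.
Hypothesis c_sym : forall x y, c x y = c y x.
Hypothesis no_short_rainbow : ~ rainbow_cycle c (2 * k + 1).

Local Notation M := (k * (2 * k + 1)).

Context {f : nat -> V}.
Hypothesis f_inj : forall i j, i < M -> j < M -> f i = f j -> i = j.
Hypothesis f_rainbow : forall i j, i < M -> j < M ->
  c (f i) (f (S i mod M)) = c (f j) (f (S j mod M)) -> i = j.

Definition vertex p := f (p mod M).
Definition side p := c (vertex p) (vertex (S p)).
Definition chord p := c (vertex p) (vertex (p + 2 * k)).
Definition chord_repeats_side a lo hi := exists t, lo <= t < hi /\ chord a = side (a + t).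

Lemma vertex_add_period p q : vertex (p + q * M) = vertex p.
Proof. unfold vertex. now rewrite Nat.Div0.mod_add. Qed.

Lemma vertex_eq_mod p q : vertex p = vertex q -> p mod M = q mod M.
Proof. intro E. apply f_inj; [apply Nat.mod_upper_bound; nia .. | exact E]. Qed.

Lemma vertex_inj_window p q : vertex p = vertex q -> p < q + M -> q < p + M -> p = q.
Proof.
  intros E Hp Hq.
  destruct (mod_eq_window M p q (vertex_eq_mod p q E)) as [| [|]]; nia.
Qed.

Lemma side_eq_window p q : side p = side q -> p < q + 2 * M -> q < p + 2 * M ->
  p = q \/ p = q + M \/ q = p + M.
Proof.
  intro E. apply mod_eq_window.
  assert (Hsucc : forall x, S (x mod M) mod M = S x mod M).
  { intro x. rewrite <- (Nat.add_1_r x), <- Nat.add_1_r. apply Nat.Div0.add_mod_idemp_l. }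
  apply f_rainbow; [apply Nat.mod_upper_bound; nia .. |].
  rewrite !Hsucc. exact E.
Qed.

Lemma side_shift_inj a t t' : side (a + t) = side (a + t') -> t < M -> t' < M -> t = t'.
Proof. intros E Ht Ht'. apply side_eq_window in E; nia. Qed.

Lemma chord_repeats_side_add_period a q lo hi :
  chord_repeats_side (a + q * M) lo hi <-> chord_repeats_side a lo hi.
Proof.
  assert (Hchord : chord (a + q * M) = chord a).
  { unfold chord. replace (a + q * M + 2 * k) with (a + 2 * k + q * M) by ring.
    now rewrite !vertex_add_period. }
  assert (Hside : forall t, side (a + q * M + t) = side (a + t)).
  { intro t. unfold side.
    replace (a + q * M + t) with (a + t + q * M) by ring.
    replace (S (a + t + q * M)) with (S (a + t) + q * M) by ring.
    now rewrite !vertex_add_period. }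
  unfold chord_repeats_side. setoid_rewrite Hside. now rewrite Hchord.
Qed.

Lemma chord_low_not_high a :
  chord_repeats_side a 0 k -> chord_repeats_side a k (2 * k) -> False.
Proof.
  intros (t & Ht & Et) (t' & Ht' & Et'). rewrite Et in Et'.
  apply side_shift_inj in Et'; nia.
Qed.

Lemma chord_repeats_arc a : chord_repeats_side a 0 (2 * k).
Proof.
  pose (w i := if i <=? 2 * k then a + i else a).
  assert (Hside : forall i, i < 2 * k -> c (vertex (w i)) (vertex (w (S i))) = side (a + i)).
  { intros i Hi. unfold w, side.
    destruct (Nat.leb_spec i (2 * k)), (Nat.leb_spec (S i) (2 * k)); try lia.
    do 2 f_equal; lia. }
  assert (Hchord : c (vertex (w (2 * k))) (vertex (w (S (2 * k)))) = chord a).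
  { unfold w, chord. rewrite Nat.leb_refl.
    destruct (Nat.leb_spec (S (2 * k)) (2 * k)); [lia |]. apply c_sym. }
  destruct (closed_walk_repeats_colour c (2 * k + 1) (fun i => vertex (w i)) no_short_rainbow)
    as (i & j & Hij & E).
  - unfold w. destruct (Nat.leb_spec (2 * k + 1) (2 * k)); [lia |]. now rewrite Nat.add_0_r.
  - intros i j Hij E. unfold w in E.
    destruct (Nat.leb_spec i (2 * k)), (Nat.leb_spec j (2 * k)); try lia.
    apply vertex_inj_window in E; nia.
  - cbn beta in E. destruct (Nat.eq_dec j (2 * k)) as [-> | Hj].
    + exists i. rewrite <- Hchord, <- Hside by lia. split; [lia | now symmetry].
    + rewrite !Hside in E by lia. apply side_shift_inj in E; nia.
Qed.

Lemma chord_zigzag s :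
  chord_repeats_side s 0 k \/ chord_repeats_side (s + 2 * k * k) k (2 * k).
Proof.
  pose (w i := s + (if i <=? k then 2 * k * i else 2 * k + 1 - i)).
  assert (Hchord : forall i, i <= k ->
    c (vertex (w i)) (vertex (w (S i))) = chord (s + 2 * k * i)).
  { intros i Hi. unfold w, chord.
    destruct (Nat.leb_spec i k), (Nat.leb_spec (S i) k); try lia.
    - do 2 f_equal; nia.
    - f_equal. replace (s + 2 * k * i + 2 * k) with (s + (2 * k + 1 - S i) + 1 * M) by nia.
      now rewrite vertex_add_period. }
  assert (Hside : forall i, k < i <= 2 * k ->
    c (vertex (w i)) (vertex (w (S i))) = side (s + (2 * k - i))).
  { intros i Hi. unfold w, side.
    destruct (Nat.leb_spec i k), (Nat.leb_spec (S i) k); try lia.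
    rewrite c_sym. do 2 f_equal; lia. }
  destruct (closed_walk_repeats_colour c (2 * k + 1) (fun i => vertex (w i)) no_short_rainbow)
    as (i & j & Hij & E).
  - unfold w. destruct (Nat.leb_spec (2 * k + 1) k), (Nat.leb_spec 0 k); try lia.
    f_equal; lia.
  - intros i j Hij E. unfold w in E.
    destruct (Nat.leb_spec i k), (Nat.leb_spec j k); try lia;
      apply vertex_inj_window in E; try nia.
    destruct i; nia.
  - cbn beta in E. destruct (Nat.le_gt_cases j k) as [Hj | Hj].
    + rewrite !Hchord in E by lia.
      destruct (chord_repeats_arc (s + 2 * k * i)) as (t & Ht & Et).
      destruct (chord_repeats_arc (s + 2 * k * j)) as (t' & Ht' & Et').
      rewrite Et, Et' in E. apply side_eq_window in E; [| nia ..].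
      destruct E as [E | [E | E]]; [nia .. |].
      assert (i = 0 /\ j = k) as [-> ->] by nia.
      left. exists t. rewrite Nat.mul_0_r, Nat.add_0_r in Et. split; [nia | exact Et].
    + destruct (Nat.le_gt_cases i k) as [Hi | Hi].
      * rewrite Hchord, Hside in E by lia.
        destruct (chord_repeats_arc (s + 2 * k * i)) as (t & Ht & Et).
        rewrite Et in E. apply side_eq_window in E; [| nia ..].
        destruct E as [E | [E | E]]; [| | nia].
        -- assert (i = 0) as -> by nia.
           left. exists t. rewrite Nat.mul_0_r, Nat.add_0_r in Et. split; [nia | exact Et].
        -- assert (i = k) as -> by nia.
           right. exists t. split; [nia | exact Et].
      * rewrite !Hside in E by lia. apply side_shift_inj in E; nia.
Qed.

Lemma chord_high_shift a :
  chord_repeats_side a k (2 * k) -> chord_repeats_side (a + 2 * k * k) k (2 * k).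
Proof.
  intro Hhigh. destruct (chord_zigzag a) as [Hlow | Hshift]; [| exact Hshift].
  exfalso. exact (chord_low_not_high a Hlow Hhigh).
Qed.

Lemma chord_high_shift_iter a n :
  chord_repeats_side a k (2 * k) -> chord_repeats_side (a + n * (2 * k * k)) k (2 * k).
Proof.
  intro Hhigh. induction n as [| n IH]; [now rewrite Nat.add_0_r |].
  replace (a + S n * (2 * k * k)) with (a + n * (2 * k * k) + 2 * k * k) by lia.
  now apply chord_high_shift.
Qed.

Lemma chord_high_then_low : exists a,
  chord_repeats_side a k (2 * k) /\ chord_repeats_side (a + k) 0 k.
Proof.
  destruct (closed_walk_repeats_colour c (2 * k + 1) (fun i => vertex (2 * k * i))
              no_short_rainbow) as (i & j & Hij & E).
  - rewrite Nat.mul_0_r. replace (2 * k * (2 * k + 1)) with (0 + 2 * M) by ring.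
    apply vertex_add_period.
  - intros i j Hij E. apply vertex_eq_mod, mod_eq_window in E; [| nia ..].
    destruct E as [E | [E | E]]; [nia .. |].
    assert (Hpar : k * (2 * j) = k * (2 * i + 2 * k + 1)) by nia.
    apply Nat.mul_cancel_l in Hpar; lia.
  - cbn beta in E. rewrite !Nat.mul_succ_r in E. fold (chord (2 * k * i)) (chord (2 * k * j)) in E.
    destruct (chord_repeats_arc (2 * k * i)) as (t & Ht & Et).
    destruct (chord_repeats_arc (2 * k * j)) as (t' & Ht' & Et').
    rewrite Et, Et' in E. apply side_eq_window in E; [| nia ..].
    destruct E as [E | [E | E]]; [nia .. |].
    assert (j = i + k \/ j = i + k + 1) as [-> | ->] by nia.
    + exists (2 * k * (i + k)). split; [exists t'; split; [nia | exact Et'] |].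
      replace (2 * k * (i + k) + k) with (2 * k * i + 1 * M) by ring.
      apply chord_repeats_side_add_period. exists t. split; [nia | exact Et].
    + exists (2 * k * i). split; [exists t; split; [nia | exact Et] |].
      apply (chord_repeats_side_add_period _ 1).
      replace (2 * k * i + k + 1 * M) with (2 * k * (i + k + 1)) by ring.
      exists t'. split; [nia | exact Et'].
Qed.

End LongRainbowCycle.

Theorem lemma9 (V C : Type) (c : V -> V -> C) (k : nat)
  (Hk : 1 <= k) (Hsym : forall x y : V, c x y = c y x) :
  ~ rainbow_cycle c (2 * k + 1) -> ~ rainbow_cycle c (k * (2 * k + 1)).
Proof.
  intros no_short [f [f_inj f_rainbow]].
  destruct (chord_high_then_low Hk Hsym no_short f_inj f_rainbow) as (a & Hhigh & Hlow).
  apply (chord_low_not_high Hk f_rainbow (a + k) Hlow).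
  apply (chord_repeats_side_add_period (a + k) (2 * k - 1)).
  replace (a + k + (2 * k - 1) * (k * (2 * k + 1))) with (a + 2 * k * (2 * k * k)) by nia.
  exact (chord_high_shift_iter Hk Hsym no_short f_inj f_rainbow a (2 * k) Hhigh).
Qed.
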